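(* For every nonzero $Q(X,Y)\in M_{s,\ell}$, $\mathrm{wdeg}_{1,k-1}Q(X,Y)=\mathrm{wdeg}_{1,-1}\varphi(Q(X,Y))+sk$.
   Context: Let $\mathbb F_q$ be a finite field, $1\le k<n<q$, $\alpha_0,\dots,\alpha_{n-1}$ distinct nonzero elements of $\mathbb F_q$, $w_0,\dots,w_{n-1}$ nonzero elements of $\mathbb F_q$, and $r\in\mathbb F_q^n$ a word with $r_i=0$ for $i=0,\dots,k-1$; let $r_i'=r_i/w_i$. For positive integers $s\le\ell$, $M_{s,\ell}$ is the $\mathbb F_q[X]$-module of all $Q\in\mathbb F_q[X,Y]$ of $Y$-degree at most $\ell$ such that for each $i$, $Q(X+\alpha_i,Y+r_i')$ has no monomials of total degree less than $s$. Let $L(X)=\prod_{i=0}^{k-1}(X-\alpha_i)$ and $\varphi(Q)(X,Y)=L(X)^{-s}Q(X,L(X)Y)$ for $Q\in M_{s,\ell}$ (under the assumption on $r$, $\varphi(Q)\in\mathbb F_q[X,Y]$). For integers $u,v$, $\mathrm{wdeg}_{u,v}$ of a nonzero bivariate polynomial is the maximum of $ui+vj$ over its monomials $X^iY^j$. *)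

(* Bivariate polynomials are {poly {poly F}}:
   outer variable = Y, coefficients are polynomials in X (polyXY convention). *)
From HB Require Import structures.
From mathcomp Require Import all_boot all_order all_algebra.
Set Implicit Arguments. Unset Strict Implicit. Unset Printing Implicit Defensive.
Import Order.TTheory GRing.Theory Num.Theory.
Local Open Scope ring_scope.

Definition wdeg_vals (F : nzRingType) (u v : int) (P : {poly {poly F}}) : seq int :=
  [seq u * (p.2 : nat)%:Z + v * (p.1 : nat)%:Z
    | p <- [seq (j, i) | j <- iota 0 (size P), i <- iota 0 (size P`_j)]
    & (P`_p.1)`_p.2 != 0].

(* wdeg_{u,v} P = max of u*i + v*j over monomials of P (meaningful for P != 0). *)
Definition wdeg (F : nzRingType) (u v : int) (P : {poly {poly F}}) : int :=
  let s := wdeg_vals u v P in \big[Num.max/head 0 s]_(x <- s) x.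

Definition shiftXY (F : comNzRingType) (a b : F) (Q : {poly {poly F}})
  : {poly {poly F}} :=
  (map_poly (fun p : {poly F} => p \Po ('X + a%:P)) Q) \Po ('X + (b%:P)%:P).

Definition mult_ge (F : comNzRingType) (s : nat) (a b : F) (Q : {poly {poly F}}) :=
  forall i j : nat, (i + j < s)%N -> ((shiftXY a b Q)`_j)`_i = 0.

(* Membership in M_{s,l} (with r'_i = r_i / w_i). *)
Definition in_M (F : fieldType) (n s l : nat) (alpha w r : 'I_n -> F)
  (Q : {poly {poly F}}) : Prop :=
  (size Q <= l.+1)%N /\ forall i : 'I_n, mult_ge s (alpha i) (r i / w i) Q.

Definition Lpoly (F : fieldType) (n k : nat) (alpha : 'I_n -> F) : {poly F} :=
  \prod_(i < n | (i < k)%N) ('X - (alpha i)%:P).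

(* phi(Q)(X,Y) = L(X)^{-s} Q(X, L(X) Y): the coefficient of Y^j is
   Q_j(X) L(X)^j / L(X)^s (an exact division under the hypotheses). *)
Definition phi (F : fieldType) (s : nat) (L : {poly F}) (Q : {poly {poly F}})
  : {poly {poly F}} :=
  \poly_(j < size Q) ((Q`_j * L ^+ j) %/ L ^+ s).

From HB Require Import structures.
From mathcomp Require Import all_boot all_order all_algebra all_field.
From mathcomp Require Import zify.

Set Implicit Arguments.
Unset Strict Implicit.
Unset Printing Implicit Defensive.
Import Order.TTheory GRing.Theory Num.Theory.
Local Open Scope ring_scope.

(* Write Q = sum_j Q_j(X) Y^j.  Since r_i = 0 for i < k, multiplicity s at
   (alpha_i, 0) forces (X - alpha_i)^(s-j) | Q_j, hence L^(s-j) | Q_j, and the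
   Y^j-coefficient P_j of phi(Q) satisfies P_j L^s = Q_j L^j.  As deg L = k,
   P_j vanishes exactly when Q_j does and deg P_j + sk = deg Q_j + kj: every
   row's (1,k-1)-weighted degree in Q is its (1,-1)-weighted degree in phi(Q)
   plus sk, so the same holds for the maxima. *)

Section WeightedDegree.

Variable F : nzRingType.
Implicit Types (P : {poly {poly F}}) (u v : int).

Lemma mem_wdeg_vals u v P x :
  reflect (exists i j : nat, (P`_j)`_i != 0 /\ x = u * i%:Z + v * j%:Z)
          (x \in wdeg_vals u v P).
Proof.
apply: (iffP mapP) => [[[j i]] | [i [j [nz ->]]]].
  by rewrite mem_filter /= => /andP[nz _] ->; exists i, j.
exists (j, i) => //; rewrite mem_filter /= nz; apply/allpairsPdep.
exists j, i; rewrite !mem_iota !add0n; split=> //; rewrite ltnNge.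
  by apply: contra nz => /(nth_default 0) ->; rewrite coef0.
by apply: contra nz => /(nth_default 0) ->.
Qed.

Lemma bigmax_seq_mem (s : seq int) x0 : \big[Num.max/x0]_(x <- s) x \in x0 :: s.
Proof.
rewrite big_seq; apply: (big_ind (fun y => y \in x0 :: s)); first exact: mem_head.
  by move=> x y xs ys; case: leP.
by move=> x xs; rewrite inE xs orbT.
Qed.

Lemma wdeg_max u v P : P != 0 ->
  wdeg u v P \in wdeg_vals u v P /\
  forall x, x \in wdeg_vals u v P -> x <= wdeg u v P.
Proof.
move=> nzP; have nzlead : P`_(size P).-1 != 0 by rewrite -lead_coefE lead_coef_eq0.
have : u * (size P`_(size P).-1).-1%:Z + v * (size P).-1%:Z \in wdeg_vals u v P.
  apply/mem_wdeg_vals; exists (size P`_(size P).-1).-1, (size P).-1.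
  by rewrite -lead_coefE lead_coef_eq0.
rewrite /wdeg; case: (wdeg_vals u v P) => [|x0 s] //= _; split.
  by case/predU1P: (bigmax_seq_mem (x0 :: s) x0) => [->|//]; exact: mem_head.
by move=> x xs; exact: le_bigmax_seq.
Qed.

Lemma coef_neq0_leq_deg (p : {poly F}) i : p`_i != 0 -> (i <= (size p).-1)%N.
Proof.
move=> nz; have : (i < size p)%N by rewrite ltnNge; apply: contra nz => /(nth_default 0) ->.
by case: (size p).
Qed.

Lemma wdeg1_row_le v P j :
  P`_j != 0 -> (size P`_j).-1%:Z + v * j%:Z <= wdeg 1 v P.
Proof.
move=> nzj; have nzP : P != 0 by apply: contraNneq nzj => ->; rewrite coef0.
apply: (wdeg_max 1 v nzP).2; apply/mem_wdeg_vals.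
by exists (size P`_j).-1, j; rewrite mul1r -lead_coefE lead_coef_eq0.
Qed.

Lemma wdeg1_attained v P : P != 0 ->
  exists2 j, P`_j != 0 & wdeg 1 v P = (size P`_j).-1%:Z + v * j%:Z.
Proof.
move=> nzP; have [/mem_wdeg_vals[i [j [nzij wdegE]]] _] := wdeg_max 1 v nzP.
have nzj : P`_j != 0 by apply: contraNneq nzij => ->; rewrite coef0.
exists j => //; apply/eqP; rewrite eq_le wdeg1_row_le // andbT wdegE mul1r.
by rewrite lerD2r lez_nat coef_neq0_leq_deg.
Qed.

Lemma wdeg1_shift v v' c P (P' : {poly {poly F}}) :
  (forall j, (P`_j == 0) = (P'`_j == 0)) ->
  (forall j, P`_j != 0 -> (size P`_j)%:Z + v * j%:Z = (size P'`_j)%:Z + v' * j%:Z + c) ->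
  P != 0 -> wdeg 1 v P = wdeg 1 v' P' + c.
Proof.
move=> supp sizeE nzP.
have rowE j : P`_j != 0 ->
    (size P`_j).-1%:Z + v * j%:Z = (size P'`_j).-1%:Z + v' * j%:Z + c.
  move=> nzj; have nz'j : P'`_j != 0 by rewrite -supp.
  have := sizeE j nzj; rewrite -!size_poly_gt0 in nzj nz'j.
  lia.
have [j nzj wdegE] := wdeg1_attained v nzP.
have nz'j : P'`_j != 0 by rewrite -supp.
have nzP' : P' != 0 by apply: contraNneq nz'j => ->; rewrite coef0.
have [j' nz'j' wdeg'E] := wdeg1_attained v' nzP'.
have nzj' : P`_j' != 0 by rewrite supp.
apply/eqP; rewrite eq_le {1}wdegE rowE // lerD2r (wdeg1_row_le _ nz'j) /=.
by rewrite wdeg'E -rowE // (wdeg1_row_le _ nzj').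
Qed.

End WeightedDegree.

Section Divisibility.

Variable F : fieldType.
Implicit Types (p : {poly F}) (a : F).

Lemma XsubC_exp_dvdp p a m :
  (forall i, (i < m)%N -> (p \Po ('X + a%:P))`_i = 0) -> ('X - a%:P) ^+ m %| p.
Proof.
move=> low0; set q := p \Po ('X + a%:P).
have qE : q = drop_poly m q * 'X^m.
  rewrite -{1}(poly_take_drop m q) [take_poly m q](_ : _ = 0) ?add0r //.
  by apply/polyP => i; rewrite coef_take_poly coef0; case: ifP => // /low0.
by rewrite -(comp_polyXaddC_K p a) -/q qE comp_polyM comp_Xn_poly dvdp_mull.
Qed.

Lemma prod_XsubC_exp_dvdp (r : seq F) m p : uniq r ->
  (forall z, z \in r -> ('X - z%:P) ^+ m %| p) ->
  \prod_(z <- r) ('X - z%:P) ^+ m %| p.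
Proof.
elim: r => [|x r IHr] /=; first by rewrite big_nil dvd1p.
case/andP => xNr uniq_r dvd_p; rewrite big_cons Gauss_dvdp.
  by rewrite dvd_p ?mem_head // IHr // => z zr; rewrite dvd_p // inE zr orbT.
rewrite prodrXl; apply/coprimep_expl/coprimep_expr.
by rewrite coprimep_sym coprimep_XsubC root_prod_XsubC.
Qed.

Lemma shiftXY_Y0 a (Q : {poly {poly F}}) :
  shiftXY a 0 Q = map_poly (fun p => p \Po ('X + a%:P)) Q.
Proof. by rewrite /shiftXY !raddf0 addr0 comp_polyXr. Qed.

Lemma mult_ge_Y0_dvdp m a (Q : {poly {poly F}}) j :
  mult_ge m a 0 Q -> ('X - a%:P) ^+ (m - j) %| Q`_j.
Proof.
move=> Qm; apply: XsubC_exp_dvdp => i ltim.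
have := Qm i j; rewrite shiftXY_Y0 coef_map_id0 ?comp_poly0 //; apply; lia.
Qed.

End Divisibility.

Section LocatorPolynomial.

Variables (F : fieldType) (n k : nat) (alpha : 'I_n -> F).

Lemma size_Lpoly : (k <= n)%N -> size (Lpoly k alpha) = k.+1.
Proof.
by move=> le_kn; rewrite /Lpoly (big_ord_narrow le_kn) -big_enum size_prod_XsubC size_enum_ord.
Qed.

Lemma Lpoly_exp_dvdp m (Q : {poly {poly F}}) j : injective alpha ->
  (forall i : 'I_n, (i < k)%N -> mult_ge m (alpha i) 0 Q) ->
  Lpoly k alpha ^+ (m - j) %| Q`_j.
Proof.
move=> alpha_inj Qm; set I := [seq i : 'I_n <- index_enum 'I_n | (i < k)%N].
have := @prod_XsubC_exp_dvdp F (map alpha I) (m - j) Q`_j.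
rewrite big_map big_filter prodrXl; apply.
  by rewrite map_inj_uniq ?filter_uniq ?index_enum_uniq.
by move=> z /mapP[i]; rewrite mem_filter => /andP[lt_ik _] ->; apply/mult_ge_Y0_dvdp/Qm.
Qed.

End LocatorPolynomial.

Section Phi.

Variables (F : fieldType) (s k : nat) (L : {poly F}) (Q : {poly {poly F}}).
Hypothesis size_L : size L = k.+1.
Hypothesis Lexp_dvdp : forall j, L ^+ (s - j) %| Q`_j.

Lemma phi_coefM j : (phi s L Q)`_j * L ^+ s = Q`_j * L ^+ j.
Proof.
have Ls_dvdp : L ^+ s %| Q`_j * L ^+ j.
  case: (leqP s j) => [le_sj | /ltnW le_js]; first by rewrite dvdp_mull ?dvdp_exp2l.
  by rewrite -(subnK le_js) exprD dvdp_mul.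
rewrite coef_poly; case: ltnP => [_|le_Qj]; first by rewrite divpK.
by rewrite nth_default ?mul0r.
Qed.

Lemma size_Lpoly_exp m : size (L ^+ m) = (k * m).+1.
Proof.
have nzLm : L ^+ m != 0 by rewrite expf_neq0 // -size_poly_gt0 size_L.
by rewrite -(prednK (_ : 0 < size (L ^+ m))%N) ?size_poly_gt0 // size_exp size_L mulnC.
Qed.

Lemma wdeg_phi : Q != 0 ->
  wdeg 1 (k%:Z - 1) Q = wdeg 1 (-1) (phi s L Q) + (s * k)%:Z.
Proof.
have nzL m : L ^+ m != 0 by rewrite -size_poly_gt0 size_Lpoly_exp.
have supp j : (Q`_j == 0) = ((phi s L Q)`_j == 0).
  by rewrite -(mulIr_eq0 _ (mulIf (nzL j))) -phi_coefM mulf_eq0 (negPf (nzL s)) orbF.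
apply: wdeg1_shift => // j nzQj; have nzPj : (phi s L Q)`_j != 0 by rewrite -supp.
have := congr1 (fun p : {poly F} => size p) (phi_coefM j).
rewrite !size_mul // !size_Lpoly_exp !addnS /= => /(congr1 Posz).
by rewrite mulrBl mulN1r mul1r !PoszD !PoszM [s%:Z * _]mulrC addrA => <-; rewrite addrAC.
Qed.

End Phi.

Theorem lemma12 (F : finFieldType) (k n : nat)
  (hk : (1 <= k)%N) (hkn : (k < n)%N) (hnq : (n < #|F|)%N)
  (alpha w r : 'I_n -> F)
  (alpha_inj : injective alpha) (alpha_nz : forall i, alpha i != 0)
  (w_nz : forall i, w i != 0)
  (r0 : forall i : 'I_n, (i < k)%N -> r i = 0)
  (s l : nat) (hs : (0 < s)%N) (hsl : (s <= l)%N)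
  (Q : {poly {poly F}}) (hQ : Q != 0) (hM : @in_M F n s l alpha w r Q) :
  wdeg 1 (k%:Z - 1) Q
  = wdeg 1 (-1) (@phi F s (@Lpoly F n k alpha) Q) + (s * k)%:Z.
Proof.
case: hM => _ Qmult; apply: wdeg_phi (size_Lpoly alpha (ltnW hkn)) _ hQ => j.
apply: Lpoly_exp_dvdp => // i lt_ik.
by have := Qmult i; rewrite r0 // mul0r.
Qed.
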